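(* Let $b,c\in Z^{10}$ with $\sum_i b_i=\sum_i c_i=0$. Let $j\in\{1,3,5,7,9\}$ and let $i_1,i_2,i_3,i_4$ be the remaining four odd indices listed in cyclic order (with $i_5:=i_1$). Assume $t\mid B_j$, $t\mid C_j$, $t\nmid B_{i_l}$, $t\nmid C_{i_l}$ for $l=1,\dots,4$, and $t\nmid B_{i_l}+B_{i_{l+1}}$, $t\nmid C_{i_l}+C_{i_{l+1}}$ for $l=1,2,3,4$. Then $\mathbb{M}(b)\cong\mathbb{M}(c)$ as $B_{5,10}$-modules if and only if $$t\mid B_{i_1}C_{i_2}B_{i_3}C_{i_4}-C_{i_1}B_{i_2}C_{i_3}B_{i_4}.$$
   Context: Let $Z=\mathbb{C}[[t]]$. Let $\Gamma_{10}$ be the quiver with vertices $0,1,\dots,9$ (indices taken mod $10$) on a cycle and arrows $x_i\colon i-1\to i$, $y_i\colon i\to i-1$ for $i=1,\dots,10$. Let $B_{5,10}$ be the completed path algebra of $\Gamma_{10}$ modulo the closed ideal generated by $xy=yx$ and $x^5=y^5$ at every vertex. For $b=(b_1,\dots,b_{10})\in Z^{10}$ with $\sum_i b_i=0$, the $B_{5,10}$-module $\mathbb{M}(b)$ has $V_i=Z\oplus Z$ at every vertex, and for odd $j$: $x_j=\begin{pmatrix} t& b_j\\ 0&1\end{pmatrix}$, $y_j=\begin{pmatrix} 1&-b_j\\0&t\end{pmatrix}$; for even $j$: $x_j=\begin{pmatrix}1&b_j\\0&t\end{pmatrix}$, $y_j=\begin{pmatrix}t&-b_j\\0&1\end{pmatrix}$.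 An isomorphism $\mathbb{M}(b)\to\mathbb{M}(c)$ is a family of invertible $Z$-linear maps $\varphi_i\colon Z^2\to Z^2$ commuting with all $x_i$ and $y_i$. For odd $i$ write $B_i=b_i+b_{i+1}$ and $C_i=c_i+c_{i+1}$ (indices mod $10$). *)

From HB Require Import structures.
From mathcomp Require Import all_boot all_algebra.
From mathcomp Require Import boolp reals Rstruct complex.
From mathcomp Require Import zify.
From Stdlib Require Import Lia.

Set Implicit Arguments.
Unset Strict Implicit.
Unset Printing Implicit Defensive.

Import GRing.Theory.
Local Open Scope ring_scope.

Section PowerSeries.
Variable K : comNzRingType.

Record ps := PS { coef : nat -> K }.

HB.instance Definition _ := gen_eqMixin ps.
HB.instance Definition _ := gen_choiceMixin ps.

Lemma ps_ext (p q : ps) : (forall n, coef p n = coef q n) -> p = q.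
Proof. by case: p; case: q => f g /= e; congr PS; apply: funext. Qed.

Definition ps0 := PS (fun _ => 0).
Definition psopp (p : ps) := PS (fun n => - coef p n).
Definition psadd (p q : ps) := PS (fun n => coef p n + coef q n).
Definition ps1 := PS (fun n => (n == 0%N)%:R).
Definition psmul (p q : ps) :=
  PS (fun n => \sum_(0 <= i < n.+1) coef p i * coef q (n - i)).

Lemma psaddA : associative psadd.
Proof. by move=> p q r; apply: ps_ext => n /=; rewrite addrA. Qed.
Lemma psaddC : commutative psadd.
Proof. by move=> p q; apply: ps_ext => n /=; rewrite addrC. Qed.
Lemma psadd0 : left_id ps0 psadd.
Proof. by move=> p; apply: ps_ext => n /=; rewrite add0r. Qed.
Lemma psaddN : left_inverse ps0 psopp psadd.
Proof. by move=> p; apply: ps_ext => n /=; rewrite addNr. Qed.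

HB.instance Definition _ := GRing.isZmodule.Build ps psaddA psaddC psadd0 psaddN.

Lemma psmulC : commutative psmul.
Proof.
move=> p q; apply: ps_ext => n /=.
rewrite big_nat_rev /=; apply: eq_big_nat => i /andP[_ lin].
rewrite add0n subSS mulrC; congr (_ * _); congr (coef _ _).
by rewrite subKn // -ltnS.
Qed.

Lemma psmul1 : left_id ps1 psmul.
Proof.
move=> p; apply: ps_ext => n /=.
rewrite big_nat_recl // /= mul1r subn0 big1_seq ?addr0 // => i _.
by rewrite mul0r.
Qed.

Lemma psmulDl : left_distributive psmul psadd.
Proof.
move=> p q r; apply: ps_ext => n /=.
by rewrite -big_split /=; apply: eq_bigr => i _; rewrite mulrDl.
Qed.

Lemma psmulA : associative psmul.
Proof.
move=> p q r; apply: ps_ext => n; rewrite /psmul /=; symmetry.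
pose F i k := coef p i * coef q (k - i) * coef r (n - k).
transitivity (\sum_(0 <= i < n.+1) \sum_(0 <= k < n.+1) (if (i <= k)%N then F i k else 0)).
  rewrite [RHS]exchange_big_nat /=.
  apply: eq_big_nat => k /andP[_ lkn]; rewrite mulr_suml.
  rewrite [RHS](big_cat_nat (n := k.+1)) //= [X in _ = _ + X]big1_seq ?addr0; last first.
    move=> i; rewrite mem_index_iota => /and3P[_ ki _].
    by rewrite leqNgt ki.
  by apply: eq_big_nat => i /andP[_]; rewrite ltnS => ->.
apply: eq_big_nat => i /andP[_ lin].
rewrite (big_cat_nat (n := i)) //=; last exact: ltnW.
rewrite big1_seq ?add0r; last first.
  by move=> k /andP[_]; rewrite mem_index_iota => H; rewrite ifF //; apply/negbTE; rewrite -ltnNge; case/andP: H.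
rewrite -{1}(add0n i) big_addn mulr_sumr.
have -> : (n.+1 - i = (n - i).+1)%N by lia.
apply: eq_big_nat => j /andP[_ jn].
rewrite leq_addl /F -mulrA addnK; congr (_ * (_ * coef r _)).
by lia.
Qed.

Lemma ps1_neq0 : ps1 != ps0.
Proof.
apply/negP => /eqP /(congr1 (fun p => coef p 0)) /=.
by move/eqP; rewrite oner_eq0.
Qed.

HB.instance Definition _ :=
  GRing.Zmodule_isComNzRing.Build ps psmulA psmulC psmul1 psmulDl ps1_neq0.

Definition ps_t : ps := PS (fun n => (n == 1%N)%:R).

End PowerSeries.

Definition CC : fieldType := Rdefinitions.R[i].
Definition Z : comNzRingType := ps CC.
Definition t : Z := ps_t CC.

Definition Zdvd (a f : Z) : Prop := exists g : Z, f = a * g.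

(* The modules M(b).  Indices 1..10 of the paper are read mod 10 and   *)
(* represented in 'I_10 (paper index 10 <-> 0).  Vertex k : 'I_10;     *)
(* arrow x_j : V_(j-1) -> V_j, y_j : V_j -> V_(j-1).  Z-linear maps    *)
(* Z^2 -> Z^2 are 2x2 matrices acting on column vectors.               *)
Definition prev10 (j : 'I_10) : 'I_10 := inord ((j + 9) %% 10).
Definition next10 (j : 'I_10) : 'I_10 := inord ((j + 1) %% 10).

Definition mx2 (a b c d : Z) : 'M[Z]_2 :=
  \matrix_(r < 2, s < 2)
    (if r == 0 :> nat then (if s == 0 :> nat then a else b)
     else (if s == 0 :> nat then c else d)).

Definition xmat (b : 'I_10 -> Z) (j : 'I_10) : 'M[Z]_2 :=
  if odd j then mx2 t (b j) 0 1 else mx2 1 (b j) 0 t.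
Definition ymat (b : 'I_10 -> Z) (j : 'I_10) : 'M[Z]_2 :=
  if odd j then mx2 1 (- b j) 0 t else mx2 t (- b j) 0 1.

Definition Miso (b c : 'I_10 -> Z) : Prop :=
  exists phi : 'I_10 -> 'M[Z]_2,
    (forall k, exists psi : 'M[Z]_2, phi k *m psi = 1%:M /\ psi *m phi k = 1%:M)
    /\ (forall j, phi j *m xmat b j = xmat c j *m phi (prev10 j))
    /\ (forall j, phi (prev10 j) *m ymat b j = ymat c j *m phi j).

Definition Bsum (b : 'I_10 -> Z) (i : 'I_10) : Z := b i + b (next10 i).

Definition oidx (j : 'I_10) (l : nat) : 'I_10 := inord ((j + 2 * l) %% 10).

From HB Require Import structures.
From mathcomp Require Import all_boot all_algebra.
From mathcomp Require Import zify ring.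

Set Implicit Arguments.
Unset Strict Implicit.
Unset Printing Implicit Defensive.

Import GRing.Theory.
Local Open Scope ring_scope.

(* Since x y = y x = t at every vertex, an isomorphism M(b) -> M(c) is a family
   of invertible intertwiners of the x-arrows alone. Walking around the cycle
   from the even vertex j - 1, the x-relations at a pair of consecutive vertices
   force the intertwiner at every even position 2k into the shape
   [[p_k, q_k], [t r, s_k]] with p_(k+1) = p_k + C_k r, s_(k+1) = s_k - B_k r and
   t (q_(k+1) - q_k) = C_k s_k - B_k p_k - B_k C_k r, and conversely such data with
   a unit determinant can be completed to an isomorphism. Hence M(b) ~= M(c) iff
   these five "defects" vanish at t = 0 for some r, p, s with p s <> 0 at t = 0.
   As B_j and C_j vanish at t = 0 and both sums are 0, this is a homogeneous
   linear system of three equations in (s, p, r), whose determinant is the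
   displayed polynomial; the non-divisibility hypotheses make its explicit kernel
   vector have p s <> 0. *)

Lemma coefM (f g : Z) n :
  coef (f * g) n = \sum_(i < n.+1) coef f i * coef g (n - i).
Proof. exact: (big_mkord xpredT (fun i => coef f i * coef g (n - i))). Qed.

Definition ev0 (f : Z) : CC := coef f 0.
(* Keeps [/=] from unfolding the constant term into a Cauchy-product sum. *)
Arguments ev0 : simpl never.

Fact ev0_is_zmod_morphism : zmod_morphism ev0.
Proof. by []. Qed.

Fact ev0_is_monoid_morphism : monoid_morphism ev0.
Proof. by split=> // f g; rewrite /ev0 coefM big_ord1. Qed.

HB.instance Definition _ := GRing.isZmodMorphism.Build Z CC ev0 ev0_is_zmod_morphism.
HB.instance Definition _ := GRing.isMonoidMorphism.Build Z CC ev0 ev0_is_monoid_morphism.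

Definition cst (x : CC) : Z := PS (fun n => if n == 0%N then x else 0).

Lemma ev0_cst : cancel cst ev0. Proof. by []. Qed.

Fact cst_is_zmod_morphism : zmod_morphism cst.
Proof. by move=> x y; apply: ps_ext => -[|n] /=; rewrite ?subr0. Qed.

Fact cst_is_monoid_morphism : monoid_morphism cst.
Proof.
split; first by apply: ps_ext => -[|n].
move=> x y; apply: ps_ext => n.
rewrite coefM big_ord_recl big1 => [|i _]; last exact: mul0r.
by case: n => [|n]; rewrite /= addr0 ?mulr0.
Qed.

HB.instance Definition _ := GRing.isZmodMorphism.Build CC Z cst cst_is_zmod_morphism.
HB.instance Definition _ := GRing.isMonoidMorphism.Build CC Z cst cst_is_monoid_morphism.

Lemma ev0_tM (g : Z) : ev0 (t * g) = 0.
Proof. by rewrite /ev0 coefM big_ord1 /= mulr0n mul0r. Qed.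

Lemma coef_tMS (g : Z) n : coef (t * g) n.+1 = coef g n.
Proof.
rewrite coefM !big_ord_recl big1 => [|i _]; last by rewrite /= mulr0n mul0r.
by rewrite /= mulr0n mulr1n mul0r mul1r add0r addr0 subn1.
Qed.

Lemma t_lreg : GRing.lreg t.
Proof. by move=> f g e; apply: ps_ext => n; rewrite -!(coef_tMS _ n) e. Qed.

Definition divt (f : Z) : Z := PS (fun n => coef f n.+1).

Lemma divtK (f : Z) : ev0 f = 0 -> t * divt f = f.
Proof.
move=> f0; apply: ps_ext => -[|n]; last by rewrite coef_tMS.
by rewrite -[coef _ 0]/(ev0 _) ev0_tM -f0.
Qed.

Lemma Zdvd_tE (f : Z) : Zdvd t f <-> ev0 f = 0.
Proof.
split=> [[g ->]|/divtK <-]; first exact: ev0_tM.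
by exists (divt f).
Qed.

Lemma ev0_neq0 (f : Z) : ~ Zdvd t f -> ev0 f != 0.
Proof. by move=> ndvd; apply/eqP => /Zdvd_tE. Qed.

Definition mx_invertible {R : pzRingType} {n} (M : 'M[R]_n) :=
  exists N, M *m N = 1%:M /\ N *m M = 1%:M.

Lemma mx_invertibleP (R : comPzRingType) n (M : 'M[R]_n) :
  mx_invertible M <-> exists u, \det M * u = 1.
Proof.
split=> [[N [MN _]]|[u detMu]].
  by exists (\det N); rewrite -det_mulmx MN det1.
exists (u *: \adj M); rewrite -scalemxAr -scalemxAl mul_mx_adj mul_adj_mx.
by rewrite !scale_scalar_mx mulrC detMu.
Qed.

Lemma mx2E (a b c d : Z) (i j : 'I_2) :
  mx2 a b c d i j = if i == 0 :> nat then (if j == 0 :> nat then a else b)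
                    else (if j == 0 :> nat then c else d).
Proof. by rewrite mxE. Qed.

Lemma mx2_eta (M : 'M[Z]_2) : M = mx2 (M 0 0) (M 0 1) (M 1 0) (M 1 1).
Proof.
apply/matrixP => i j; rewrite mx2E.
by case: i => [[|[|i]] Hi] //; case: j => [[|[|j]] Hj] //=; congr (M _ _); apply: val_inj.
Qed.

Lemma mx2_inj (a b c d a' b' c' d' : Z) :
  mx2 a b c d = mx2 a' b' c' d' -> [/\ a = a', b = b', c = c' & d = d'].
Proof.
move=> e; have E i j : mx2 a b c d i j = mx2 a' b' c' d' i j by rewrite e.
by move: (E 0 0) (E 0 1) (E 1 0) (E 1 1); rewrite !mx2E.
Qed.

Lemma mul_mx2 (a b c d a' b' c' d' : Z) :
  mx2 a b c d *m mx2 a' b' c' d' =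
  mx2 (a * a' + b * c') (a * b' + b * d') (c * a' + d * c') (c * b' + d * d').
Proof.
apply/matrixP => i j; rewrite !mxE !big_ord_recl big_ord0 !mx2E /=.
by case: i => [[|[|i]] Hi] //; case: j => [[|[|j]] Hj] //=; rewrite addr0.
Qed.

Lemma det_mx2 (a b c d : Z) : \det (mx2 a b c d) = a * d - b * c.
Proof.
rewrite (expand_det_row _ 0) !big_ord_recl big_ord0 /cofactor !det_mx11 !mxE /=.
by rewrite addr0 expr0 expr1 mul1r mulN1r mulrN.
Qed.

Lemma scalar_mx2 (a : Z) : a%:M = mx2 a 0 0 a.
Proof.
apply/matrixP => i j; rewrite mx2E !mxE.
by case: i => [[|[|i]] Hi] //; case: j => [[|[|j]] Hj].
Qed.

Lemma xmat_ymat (f : 'I_10 -> Z) v : xmat f v *m ymat f v = t%:M.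
Proof. by rewrite /xmat /ymat scalar_mx2; case: odd; rewrite mul_mx2; congr mx2; ring. Qed.

Lemma ymat_xmat (f : 'I_10 -> Z) v : ymat f v *m xmat f v = t%:M.
Proof. by rewrite /xmat /ymat scalar_mx2; case: odd; rewrite mul_mx2; congr mx2; ring. Qed.

Lemma intertwine_swap (X Y X' Y' P0 P1 : 'M[Z]_2) :
  X *m Y = t%:M -> Y' *m X' = t%:M -> P1 *m X = X' *m P0 -> P0 *m Y = Y' *m P1.
Proof.
move=> XY YX' e.
have tP : t *: (P0 *m Y) = t *: (Y' *m P1).
  rewrite -mul_scalar_mx -YX' -!mulmxA (mulmxA X') -e -mulmxA XY.
  by rewrite mul_mx_scalar scalemxAr.
apply/matrixP => i k; apply: t_lreg.
have tPik := congr1 (fun M : 'M[Z]_2 => M i k) tP.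
by rewrite [LHS]mxE [RHS]mxE in tPik.
Qed.

(* The intertwiner at position 2k is [[pk k, q_k], [t r, sk k]], with
   t (q_(k+1) - q_k) = defect k (see xrel_chain). *)
Section Defect.
Variables (R : comPzRingType) (B C : nat -> R) (r p s : R).

Definition pk k := p + (\sum_(i < k) C i) * r.
Definition sk k := s - (\sum_(i < k) B i) * r.
Definition defect k := C k * sk k - B k * pk k - B k * C k * r.

Lemma pkS k : pk k.+1 = pk k + C k * r.
Proof. by rewrite /pk big_ord_recr mulrDl addrA. Qed.

Lemma skS k : sk k.+1 = sk k - B k * r.
Proof. by rewrite /sk big_ord_recr mulrDl opprD addrA. Qed.

Lemma sum_defect n :
  \sum_(k < n) defect k =
  (\sum_(k < n) C k) * s - (\sum_(k < n) B k) * p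
  - (\sum_(k < n) B k) * (\sum_(k < n) C k) * r.
Proof.
elim: n => [|n IHn]; first by rewrite !big_ord0; ring.
by rewrite !big_ord_recr /= IHn /defect /pk /sk; ring.
Qed.

End Defect.

Lemma rmorph_defect (R S : comPzRingType) (f : {rmorphism R -> S}) B C r p s k :
  f (defect B C r p s k) = defect (f \o B) (f \o C) (f r) (f p) (f s) k.
Proof. by rewrite /defect /pk /sk !(rmorphB, rmorphD, rmorphM, rmorph_sum). Qed.

Lemma big_last_eq0 (V : zmodType) (x : nat -> V) n :
  \sum_(k < n.+1) x k = 0 -> (forall k, (k < n)%N -> x k = 0) -> x n = 0.
Proof.
move=> sum0 x0; rewrite -sum0 big_ord_recr big1 /= ?add0r // => i _.
exact/x0/ltn_ord.
Qed.

Definition vanishing_defects (F : fieldType) (B C : nat -> F) : Prop :=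
  exists r p s : F, p * s != 0 /\ forall k, (k < 5)%N -> defect B C r p s k = 0.

Section DefectKernel.
Variables (F : fieldType) (B C : nat -> F).
Hypotheses (B0 : B 0%N = 0) (C0 : C 0%N = 0).
Hypotheses (sumB : \sum_(k < 5) B k = 0) (sumC : \sum_(k < 5) C k = 0).

Let sum5 (x : nat -> F) : \sum_(k < 5) x k = x 0%N + x 1%N + x 2%N + x 3%N + x 4%N.
Proof. by rewrite !big_ord_recr big_ord0 /= add0r. Qed.

Let B4 : B 4%N = - (B 1%N + B 2%N + B 3%N).
Proof. by apply/eqP; rewrite -subr_eq0 opprK -sumB sum5 B0 add0r addrC. Qed.

Let C4 : C 4%N = - (C 1%N + C 2%N + C 3%N).
Proof. by apply/eqP; rewrite -subr_eq0 opprK -sumC sum5 C0 add0r addrC. Qed.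

Let det := B 1%N * C 2%N * B 3%N * C 4%N - C 1%N * B 2%N * C 3%N * B 4%N.

Lemma defect_kernel_det r p s :
  s != 0 -> (forall k, (k < 4)%N -> defect B C r p s k = 0) -> det = 0.
Proof.
move=> s0 E; apply: (mulIf s0); rewrite mul0r.
(* For k = 1, 2, 3, defect k = C k * s - B k * p - c_k * r; eliminating p and r
   leaves s times the determinant of this linear system. *)
pose c1 := B 1%N * C 1%N.
pose c2 := B 1%N * C 2%N + B 2%N * C 1%N + B 2%N * C 2%N.
pose c3 := (B 1%N + B 2%N) * C 3%N + B 3%N * (C 1%N + C 2%N) + B 3%N * C 3%N.
have cramer : det * s =
    (B 2%N * c3 - c2 * B 3%N) * defect B C r p s 1
  - (B 1%N * c3 - c1 * B 3%N) * defect B C r p s 2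
  + (B 1%N * c2 - c1 * B 2%N) * defect B C r p s 3.
  rewrite /det /defect /pk /sk !big_ord_recr !big_ord0 /= B0 C0 B4 C4 /c1 /c2 /c3.
  by ring.
by rewrite cramer !E // !mulr0 subr0 addr0.
Qed.

Lemma det_defect_kernel :
  B 1%N != 0 -> C 1%N != 0 -> B 2%N != 0 -> C 2%N != 0 ->
  B 1%N + B 2%N != 0 -> C 1%N + C 2%N != 0 -> det = 0 -> vanishing_defects B C.
Proof.
move=> nB1 nC1 nB2 nC2 nB12 nC12 det0.
set r := B 1%N * C 2%N - C 1%N * B 2%N.
set p := C 1%N * B 2%N * (C 1%N + C 2%N).
set s := B 1%N * C 2%N * (B 1%N + B 2%N).
exists r, p, s; split; first by rewrite !mulf_neq0.
have E3 : defect B C r p s 3 = det.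
  rewrite /det /defect /pk /sk !big_ord_recr !big_ord0 /= B0 C0 B4 C4 /r /p /s.
  by ring.
have E : forall k, (k < 4)%N -> defect B C r p s k = 0.
  case=> [|[|[|[|//]]]] _; last by rewrite E3.
  - by rewrite /defect /pk /sk !big_ord0 B0 C0; ring.
  - by rewrite /defect /pk /sk !big_ord_recr !big_ord0 /= B0 C0 /r /p /s; ring.
  - by rewrite /defect /pk /sk !big_ord_recr !big_ord0 /= B0 C0 /r /p /s; ring.
move=> k; rewrite ltnS leq_eqVlt => /orP[/eqP-> | /E //].
by apply: big_last_eq0 E; rewrite sum_defect sumB sumC !mul0r !subrr.
Qed.

Lemma vanishing_defects_iff :
  B 1%N != 0 -> C 1%N != 0 -> B 2%N != 0 -> C 2%N != 0 ->
  B 1%N + B 2%N != 0 -> C 1%N + C 2%N != 0 ->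
  vanishing_defects B C <-> det = 0.
Proof.
move=> nB1 nC1 nB2 nC2 nB12 nC12; split; last exact: det_defect_kernel.
case=> r [p [s [+ E]]]; rewrite mulf_eq0 negb_or => /andP[_ s0].
by apply: (defect_kernel_det s0) => k /leqW; apply: E.
Qed.

End DefectKernel.

(* P * S - Q * (t * r) is the determinant of [[P, Q], [t r, S]]. *)
Definition divisible_defects (B C : nat -> Z) : Prop :=
  exists r P Q S : Z, (exists u, (P * S - Q * (t * r)) * u = 1) /\
    forall k, (k < 5)%N -> Zdvd t (defect B C r P S k).

Lemma divisible_defects_iff (B C : nat -> Z) :
  divisible_defects B C <-> vanishing_defects (ev0 \o B) (ev0 \o C).
Proof.
split=> [[r [P [Q [S [[u detu] E]]]]] | [rho [pi [sigma [ps0 E]]]]].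
  exists (ev0 r), (ev0 P), (ev0 S).
  split=> [|k /E /Zdvd_tE]; last by rewrite rmorph_defect.
  have : ev0 P * ev0 S * ev0 u = 1.
    rewrite -!rmorphM (_ : P * S * u = (P * S - Q * (t * r)) * u + t * (Q * r * u)).
      by rewrite rmorphD /= ev0_tM addr0 detu rmorph1.
    by ring.
  by apply: contra_eq_neq => ->; rewrite mul0r eq_sym oner_neq0.
exists (cst rho), (cst pi), 0, (cst sigma); split.
  by exists (cst (pi * sigma)^-1); rewrite mul0r subr0 -!rmorphM mulfV // rmorph1.
by move=> k /E; rewrite Zdvd_tE rmorph_defect /= !ev0_cst.
Qed.

Lemma eq_of_subr (V : zmodType) (x y u v : V) : u = v -> x - y = u - v -> x = y.
Proof. by move=> -> /eqP; rewrite subrr subr_eq0 => /eqP. Qed.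

(* [ring_from e] proves x = y when x - y is, as a ring expression, the difference
   of the two sides of the equation e (or of its symmetric). *)
Ltac ring_from e :=
  first [ refine (eq_of_subr e _); ring | refine (eq_of_subr (esym e) _); ring ].

Definition xmatn (f : nat -> Z) (m : nat) : 'M[Z]_2 :=
  if odd m then mx2 t (f m) 0 1 else mx2 1 (f m) 0 t.

Lemma xmatn_odd (f : nat -> Z) k : xmatn f k.*2.+1 = mx2 t (f k.*2.+1) 0 1.
Proof. by rewrite /xmatn /= odd_double. Qed.

Lemma xmatn_even (f : nat -> Z) k : xmatn f k.*2 = mx2 1 (f k.*2) 0 t.
Proof. by rewrite /xmatn odd_double. Qed.

(* Intertwiners indexed by positions around the cycle; the y-relations are
   omitted since they follow from the x-relations (intertwine_swap). *)
Definition Miso_nat (bb cb : nat -> Z) : Prop :=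
  exists Phi : nat -> 'M[Z]_2,
    (forall m, (m < 10)%N -> mx_invertible (Phi m)) /\
    (forall m, (m < 10)%N -> Phi m *m xmatn bb m = xmatn cb m *m Phi ((m + 9) %% 10)%N).

Definition pairsum (f : nat -> Z) (k : nat) : Z := f k.*2.+1 + f k.*2.+2.

Lemma xrel_pair (P0 P1 P2 : 'M[Z]_2) (b1 b2 c1 c2 : Z) :
  P1 *m mx2 t b1 0 1 = mx2 t c1 0 1 *m P0 ->
  P2 *m mx2 1 b2 0 t = mx2 1 c2 0 t *m P1 ->
  [/\ P0 1 0 = t * P1 1 0, P2 1 0 = t * P1 1 0,
      P2 0 0 = P0 0 0 + (c1 + c2) * P1 1 0,
      P2 1 1 = P0 1 1 - (b1 + b2) * P1 1 0
    & t * (P2 0 1 - P0 0 1) =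
      (c1 + c2) * P0 1 1 - (b1 + b2) * P0 0 0 - (b1 + b2) * (c1 + c2) * P1 1 0].
Proof.
rewrite [P0]mx2_eta [P1]mx2_eta [P2]mx2_eta !mx2E /= !mul_mx2.
move: (P0 0 0) (P0 0 1) (P0 1 0) (P0 1 1) => p q r s.
move: (P1 0 0) (P1 0 1) (P1 1 0) (P1 1 1) => a be g d.
move: (P2 0 0) (P2 0 1) (P2 1 0) (P2 1 1) => p' q' r' s'.
move=> /mx2_inj [e1 e2 e3 e4] /mx2_inj [f1 f2 f3 f4].
have hr : r = t * g by ring_from e3.
have ha : a = p + c1 * g by apply: t_lreg; rewrite hr in e1; ring_from e1.
have hd : d = s - b1 * g by ring_from e4.
have hp' : p' = a + c2 * g by ring_from f1.
have hr' : r' = t * g by ring_from f3.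
have hs' : s' = d - b2 * g by apply: t_lreg; rewrite hr' in f4; ring_from f4.
have hq : t * q = a * b1 + be - c1 * s by ring_from e2.
have hq' : t * q' = be + c2 * d - p' * b2 by ring_from f2.
split=> //; first by rewrite hp' ha; ring.
  by rewrite hs' hd; ring.
by rewrite mulrBr hq' hq hp' hd ha; ring.
Qed.

Section XChain.
Variables (bb cb : nat -> Z) (Phi : nat -> 'M[Z]_2).
Hypothesis xrel : forall m, (m < 10)%N ->
  Phi m *m xmatn bb m = xmatn cb m *m Phi ((m + 9) %% 10)%N.

Let r := Phi 1%N 1 0.
Let P := Phi 0%N 0 0.
Let S := Phi 0%N 1 1.

Let xrel_pair_at k : (k < 4)%N ->
  [/\ Phi k.*2 1 0 = t * Phi k.*2.+1 1 0, Phi k.*2.+2 1 0 = t * Phi k.*2.+1 1 0,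
      Phi k.*2.+2 0 0 = Phi k.*2 0 0 + pairsum cb k * Phi k.*2.+1 1 0,
      Phi k.*2.+2 1 1 = Phi k.*2 1 1 - pairsum bb k * Phi k.*2.+1 1 0
    & t * (Phi k.*2.+2 0 1 - Phi k.*2 0 1) =
      pairsum cb k * Phi k.*2 1 1 - pairsum bb k * Phi k.*2 0 0
      - pairsum bb k * pairsum cb k * Phi k.*2.+1 1 0].
Proof.
move=> lt_k4; have [lt1 lt2] : (k.*2.+1 < 10)%N /\ (k.*2.+2 < 10)%N by lia.
have [e1 e2] : ((k.*2.+1 + 9) %% 10 = k.*2)%N /\ ((k.*2.+2 + 9) %% 10 = k.*2.+1)%N by lia.
apply: xrel_pair; first by have := xrel lt1; rewrite !xmatn_odd e1.
by have := xrel lt2; rewrite -!doubleS !xmatn_even e2.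
Qed.

Lemma xrel_chain k : (k < 4)%N ->
  [/\ Phi k.*2 1 0 = t * r, Phi k.*2 0 0 = pk (pairsum cb) r P k,
      Phi k.*2 1 1 = sk (pairsum bb) r S k
    & t * (Phi k.*2.+2 0 1 - Phi k.*2 0 1) = defect (pairsum bb) (pairsum cb) r P S k].
Proof.
suff chain : (k < 4)%N ->
  [/\ Phi k.*2.+1 1 0 = r, Phi k.*2 0 0 = pk (pairsum cb) r P k
    & Phi k.*2 1 1 = sk (pairsum bb) r S k].
  move=> lt_k4; have [r_k p_k s_k] := chain lt_k4.
  have [r2k _ _ _ q_k] := xrel_pair_at lt_k4.
  by split; rewrite ?r2k ?q_k ?p_k ?s_k ?r_k.
elim: k => [_|k IHk lt_k4]; first by rewrite /pk /sk !big_ord0 mul0r addr0 subr0.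
have [r_k p_k s_k] := IHk (ltnW lt_k4).
have [_ r2k2 p_k1 s_k1 _] := xrel_pair_at (ltnW lt_k4).
have [r2k1 _ _ _ _] := xrel_pair_at lt_k4.
have r_k1 : Phi k.+1.*2.+1 1 0 = r by apply: t_lreg; rewrite -r2k1 r2k2 r_k.
by split=> //; [rewrite pkS p_k1 p_k r_k | rewrite skS s_k1 s_k r_k].
Qed.

End XChain.

Lemma Miso_nat_divisible (bb cb : nat -> Z) :
  \sum_(k < 5) pairsum bb k = 0 -> \sum_(k < 5) pairsum cb k = 0 ->
  Miso_nat bb cb -> divisible_defects (pairsum bb) (pairsum cb).
Proof.
move=> sB sC [Phi [inv xrel]]; have chain := xrel_chain xrel.
exists (Phi 1%N 1 0), (Phi 0%N 0 0), (Phi 0%N 0 1), (Phi 0%N 1 1); split.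
  have [u detu] := (mx_invertibleP (Phi 0%N)).1 (inv 0%N isT).
  have [r0 _ _ _] := chain 0%N isT.
  have det0 :
      \det (Phi 0%N) = Phi 0%N 0 0 * Phi 0%N 1 1 - Phi 0%N 0 1 * (t * Phi 1%N 1 0).
    by rewrite {1}[Phi 0%N]mx2_eta det_mx2 r0.
  by exists u; rewrite -det0.
have dvd4 k : (k < 4)%N -> Zdvd t (defect (pairsum bb) (pairsum cb)
    (Phi 1%N 1 0) (Phi 0%N 0 0) (Phi 0%N 1 1) k).
  by case/chain=> _ _ _ q_k; exists (Phi k.*2.+2 0 1 - Phi k.*2 0 1).
move=> k; rewrite ltnS leq_eqVlt => /orP[/eqP-> | /dvd4 //].
rewrite Zdvd_tE rmorph_defect.
apply: big_last_eq0 => [|i /dvd4/Zdvd_tE]; last by rewrite rmorph_defect.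
by rewrite sum_defect -!rmorph_sum /= sB sC rmorph0 !mul0r !subrr.
Qed.

Section Construction.
Variables (bb cb : nat -> Z) (r P Q S u : Z).
Let B := pairsum bb.
Let C := pairsum cb.
Hypotheses (bb10 : bb 10%N = bb 0%N) (cb10 : cb 10%N = cb 0%N).
Hypotheses (sumB : \sum_(k < 5) B k = 0) (sumC : \sum_(k < 5) C k = 0).
Hypothesis unit_det : (P * S - Q * (t * r)) * u = 1.
Hypothesis dvd_defect : forall k, (k < 5)%N -> Zdvd t (defect B C r P S k).

Let qk k := Q + \sum_(i < k) divt (defect B C r P S i).

Let t_qk k : (k <= 5)%N -> t * qk k = t * Q + \sum_(i < k) defect B C r P S i.
Proof.
move=> le_k5; rewrite mulrDr mulr_sumr; congr (_ + _); apply: eq_bigr => i _.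
by apply/divtK/Zdvd_tE/dvd_defect/(leq_trans (ltn_ord i)).
Qed.

Let even_mx k := mx2 (pk C r P k) (qk k) (t * r) (sk B r S k).
(* The unique solution of the x-relation at position 2k + 1 given even_mx k. *)
Let odd_mx k :=
  let b := bb k.*2.+1 in let c := cb k.*2.+1 in
  mx2 (pk C r P k + c * r) (t * qk k + c * sk B r S k - (pk C r P k + c * r) * b)
      r (sk B r S k - b * r).

Let odd_step k :
  odd_mx k *m mx2 t (bb k.*2.+1) 0 1 = mx2 t (cb k.*2.+1) 0 1 *m even_mx k.
Proof. by rewrite !mul_mx2; congr mx2; ring. Qed.

Let even_step k : (k < 5)%N ->
  even_mx k.+1 *m mx2 1 (bb k.*2.+2) 0 t = mx2 1 (cb k.*2.+2) 0 t *m odd_mx k.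
Proof.
move=> lt_k5; have qS : qk k.+1 * t = t * qk k + defect B C r P S k.
  by rewrite mulrC !t_qk ?(ltnW lt_k5) // big_ord_recr addrA.
by rewrite /even_mx pkS skS !mul_mx2 qS /defect /C /B /pairsum; congr mx2; ring.
Qed.

Let even_mx5 : even_mx 5 = even_mx 0.
Proof.
have q5 : qk 5 = qk 0.
  by apply: t_lreg; rewrite !t_qk // sum_defect sumB sumC big_ord0 !mul0r !subrr.
by rewrite /even_mx q5 /pk /sk sumB sumC !big_ord0 !mul0r.
Qed.

Let det_even k : (k <= 5)%N -> \det (even_mx k) = P * S - Q * (t * r).
Proof.
move=> le_k5; rewrite det_mx2 mulrA [qk k * t]mulrC t_qk // sum_defect /pk /sk; ring.
Qed.

Let det_odd k : (k <= 5)%N -> \det (odd_mx k) = P * S - Q * (t * r).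
Proof. by move=> le_k5; rewrite -(det_even le_k5) !det_mx2; ring. Qed.

Lemma divisible_Miso_nat : Miso_nat bb cb.
Proof.
exists (fun m => if odd m then odd_mx m./2 else even_mx m./2); split.
  move=> m lt_m10; apply/mx_invertibleP; exists u.
  by case: ifP => _; rewrite ?det_odd ?det_even //; lia.
case=> [|[|[|[|[|[|[|[|[|[|//]]]]]]]]]] _.
- by rewrite -[X in X *m _]even_mx5 /xmatn /= -bb10 -cb10; apply: even_step.
- exact: odd_step 0.
- exact: even_step 0 _.
- exact: odd_step 1.
- exact: even_step 1 _.
- exact: odd_step 2.
- exact: even_step 2 _.
- exact: odd_step 3.
- exact: even_step 3 _.
- exact: odd_step 4.
Qed.

End Construction.

Lemma Miso_nat_iff (bb cb : nat -> Z) :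
  bb 10%N = bb 0%N -> cb 10%N = cb 0%N ->
  \sum_(k < 5) pairsum bb k = 0 -> \sum_(k < 5) pairsum cb k = 0 ->
  Miso_nat bb cb <-> divisible_defects (pairsum bb) (pairsum cb).
Proof.
move=> bb10 cb10 sB sC; split; first exact: Miso_nat_divisible.
by case=> r [P [Q [S [[u unit] dvd]]]]; apply: divisible_Miso_nat unit dvd.
Qed.

(* Position m is the vertex j - 1 + m: for odd j positions and vertices have the
   same parity, and pairsum at k is B at the odd vertex j + 2k. *)
Definition vtx (j : 'I_10) (m : nat) : 'I_10 := inord ((j + 9 + m) %% 10).
Definition pos (j v : 'I_10) : nat := (v + 11 - j) %% 10.

Lemma val_vtx (j : 'I_10) m : (vtx j m : nat) = ((j + 9 + m) %% 10)%N.
Proof. by rewrite inordK // ltn_mod. Qed.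

Lemma vtx_eq (j : 'I_10) m m' :
  (j + 9 + m = j + 9 + m' %[mod 10])%N -> vtx j m = vtx j m'.
Proof. by move=> e; apply: ord_inj; rewrite !val_vtx e. Qed.

Lemma prev10_vtx (j : 'I_10) m : prev10 (vtx j m) = vtx j ((m + 9) %% 10).
Proof. by apply: ord_inj; rewrite val_vtx /prev10 inordK ?ltn_mod // val_vtx; lia. Qed.

Lemma next10_vtx (j : 'I_10) m : next10 (vtx j m) = vtx j m.+1.
Proof. by apply: ord_inj; rewrite val_vtx /next10 inordK ?ltn_mod // val_vtx; lia. Qed.

Lemma vtx1 (j : 'I_10) : vtx j 1 = j.
Proof. by apply: ord_inj; rewrite val_vtx; have := ltn_ord j; lia. Qed.

Lemma vtx10 (j : 'I_10) : vtx j 10 = vtx j 0.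
Proof. by apply: vtx_eq; lia. Qed.

Lemma odd_vtx (j : 'I_10) m : odd j -> odd (vtx j m) = odd m.
Proof.
move=> oj; rewrite val_vtx.
have -> : odd ((j + 9 + m) %% 10) = odd (j + 9 + m).
  by rewrite [in RHS](divn_eq (j + 9 + m) 10) oddD oddM andbF.
by rewrite !oddD oj.
Qed.

Lemma oidx_vtx (j : 'I_10) l : oidx j l = vtx j l.*2.+1.
Proof. by apply: ord_inj; rewrite val_vtx /oidx inordK ?ltn_mod //; lia. Qed.

Lemma pos_lt (j v : 'I_10) : (pos j v < 10)%N.
Proof. exact: ltn_mod. Qed.

Lemma vtx_pos (j v : 'I_10) : vtx j (pos j v) = v.
Proof.
by apply: ord_inj; rewrite val_vtx /pos; have := ltn_ord j; have := ltn_ord v; lia.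
Qed.

Lemma pos_prev10 (j v : 'I_10) : pos j (prev10 v) = ((pos j v + 9) %% 10)%N.
Proof.
by rewrite /pos /prev10 inordK ?ltn_mod //; have := ltn_ord j; have := ltn_ord v; lia.
Qed.

Lemma Miso_iff_nat (b c : 'I_10 -> Z) (j : 'I_10) :
  odd j -> Miso b c <-> Miso_nat (b \o vtx j) (c \o vtx j).
Proof.
move=> oj; have xmatE f m : xmat f (vtx j m) = xmatn (f \o vtx j) m.
  by rewrite /xmat /xmatn odd_vtx.
split=> [[phi [inv [xrel _]]] | [Phi [inv xrel]]].
  exists (phi \o vtx j); split=> m _ /=; first exact: inv.
  by rewrite -!xmatE -prev10_vtx; apply: xrel.
have xrel' v : Phi (pos j v) *m xmat b v = xmat c v *m Phi (pos j (prev10 v)).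
  by have := xrel _ (pos_lt j v); rewrite -!xmatE vtx_pos pos_prev10.
exists (fun v => Phi (pos j v)); split=> [v | ]; first exact/inv/pos_lt.
split=> v; first exact: xrel'.
exact: intertwine_swap (xmat_ymat b v) (ymat_xmat c v) (xrel' v).
Qed.

Lemma Bsum_oidx (j : 'I_10) (f : 'I_10 -> Z) l :
  Bsum f (oidx j l) = pairsum (f \o vtx j) l.
Proof. by rewrite /Bsum oidx_vtx next10_vtx. Qed.

Lemma Bsum_self (j : 'I_10) (f : 'I_10 -> Z) : Bsum f j = pairsum (f \o vtx j) 0.
Proof. by rewrite -[in LHS](vtx1 j) /Bsum next10_vtx. Qed.

Lemma sum_pairsum (j : 'I_10) (f : 'I_10 -> Z) :
  \sum_(v < 10) f v = \sum_(k < 5) pairsum (f \o vtx j) k.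
Proof.
rewrite (reindex_inj (h := fun m : 'I_10 => vtx j m.+1)) /=; last first.
  move=> m m' /(congr1 (@nat_of_ord 10)); rewrite !val_vtx => e; apply: ord_inj.
  by have := ltn_ord m; have := ltn_ord m'; lia.
by rewrite !big_ord_recr !big_ord0 /= /pairsum /= vtx10 !add0r !addrA.
Qed.

Theorem theorem2p5 (b c : 'I_10 -> Z) (j : 'I_10) :
  \sum_(k < 10) b k = 0 ->
  \sum_(k < 10) c k = 0 ->
  odd j ->
  Zdvd t (Bsum b j) ->
  Zdvd t (Bsum c j) ->
  (forall l : 'I_4,
      ~ Zdvd t (Bsum b (oidx j l.+1)) /\ ~ Zdvd t (Bsum c (oidx j l.+1))) ->
  (forall l : 'I_4,
      ~ Zdvd t (Bsum b (oidx j l.+1) + Bsum b (oidx j ((l.+1 %% 4).+1)))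
   /\ ~ Zdvd t (Bsum c (oidx j l.+1) + Bsum c (oidx j ((l.+1 %% 4).+1)))) ->
  (Miso b c <->
   Zdvd t (Bsum b (oidx j 1) * Bsum c (oidx j 2) * Bsum b (oidx j 3) * Bsum c (oidx j 4)
         - Bsum c (oidx j 1) * Bsum b (oidx j 2) * Bsum c (oidx j 3) * Bsum b (oidx j 4))).
Proof.
move=> + + odd_j + + ndvd ndvd2.
rewrite !(sum_pairsum j) !Bsum_oidx !Bsum_self => sum_b sum_c /Zdvd_tE Bj0 /Zdvd_tE Cj0.
have [/ev0_neq0 nB1 /ev0_neq0 nC1] := ndvd ord0.
have [/ev0_neq0 nB2 /ev0_neq0 nC2] := ndvd (@Ordinal 4 1 isT).
have [/ev0_neq0 + /ev0_neq0] := ndvd2 ord0; rewrite !Bsum_oidx !rmorphD => nB12 nC12.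
rewrite !Bsum_oidx in nB1 nC1 nB2 nC2.
apply: (iff_trans (Miso_iff_nat b c odd_j)).
apply: (iff_trans (Miso_nat_iff _ _ sum_b sum_c)); try by rewrite /= vtx10.
apply: iff_trans; first exact: divisible_defects_iff.
rewrite Zdvd_tE !(rmorphB, rmorphM).
apply: vanishing_defects_iff => //; rewrite -[RHS](rmorph0 ev0).
  by rewrite -sum_b rmorph_sum.
by rewrite -sum_c rmorph_sum.
Qed.
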